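(* Let $q\ge 2$ be a prime power, $n=q^2(q^2-q+1)$, and $X\subseteq V(H_q)$ with $|X|=k$. Partition $\mathcal T_X$ into $\mathcal S\sqcup\mathcal M\sqcup\mathcal L$, where $\mathcal S=\{T\in\mathcal T_X : |T|\le \sqrt{2k}/\log n\}$, $\mathcal M=\{T\in\mathcal T_X: \sqrt{2k}/\log n<|T|\le\sqrt{2k}\}$, $\mathcal L=\{T\in\mathcal T_X: |T|>\sqrt{2k}\}$. For $\mathcal U\subseteq\mathcal T_X$ write $v(\mathcal U)=\sum_{T\in\mathcal U}|T|$. Then \[ v(\mathcal L)\le 2k \qquad\text{and}\qquad v(\mathcal S\sqcup\mathcal M)\ge (q-1)k-q^3-1. \]
   Context: $\mathcal H$ is the Hermitian unital $\{\langle x,y,z\rangle : x^{q+1}+y^{q+1}+z^{q+1}=0\}$ in the projective plane $\mathrm{PG}(2,q^2)$ (it has $q^3+1$ points and every line meets it in $1$ or $q+1$ points; lines meeting it in $q+1$ points are secants). $H_q$ is the graph on the set of secants, two distinct secants adjacent iff they meet in a point of $\mathcal H$. For $P\in\mathcal H$, $C_P$ is the set of secants through $P$ and $\mathcal C=\{C_P:P\in\mathcal H\}$; these are $q^3+1$ cliques of order $q^2$, any two sharing exactly one vertex, and every vertex lies in exactly $q+1$ of them. For $X\subseteq V(H_q)$, $\mathcal T_X=\{X\cap C : C\in\mathcal C,\ |X\cap C|\ge 2\}$ (indexed by the cliques $C$). Logarithms are natural. *)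

From HB Require Import structures.
From mathcomp Require Import all_boot all_order all_algebra.
From mathcomp Require Import reals exp.
Unset Printing Implicit Defensive.
Import Order.TTheory GRing.Theory Num.Theory.
Local Open Scope ring_scope.

Section Hermitian.
Variables (F : finFieldType) (q : nat).

Definition vec := (F * F * F)%type.
Definition vx (v : vec) : F := v.1.1.
Definition vy (v : vec) : F := v.1.2.
Definition vz (v : vec) : F := v.2.
Definition vscale (c : F) (v : vec) : vec := (c * vx v, c * vy v, c * vz v).
Definition vdot (a v : vec) : F := vx a * vx v + vy a * vy v + vz a * vz v.
Definition nonzero_vecs : {set vec} := [set v : vec | v != (0, 0, 0)].

(* projective point <v> of PG(2,F), represented as the set of nonzero
   vectors spanning the same 1-dimensional subspace *)
Definition pt (v : vec) : {set vec} :=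
  [set vscale c v | c in [set c : F | c != 0]].
Definition PG_points : {set {set vec}} := [set pt v | v in nonzero_vecs].

Definition PG_line (a : vec) : {set {set vec}} :=
  [set P in PG_points | [exists v in P, vdot a v == 0]].
Definition PG_lines : {set {set {set vec}}} :=
  [set PG_line a | a in nonzero_vecs].

Definition herm (v : vec) : bool :=
  vx v ^+ q.+1 + vy v ^+ q.+1 + vz v ^+ q.+1 == 0.
Definition unital : {set {set vec}} :=
  [set pt v | v in [set v in nonzero_vecs | herm v]].

(* secants: lines meeting the unital in q+1 points = vertices of H_q *)
Definition secants : {set {set {set vec}}} :=
  [set l in PG_lines | #|l :&: unital| == q.+1]%N.

Definition clique (P : {set vec}) : {set {set {set vec}}} :=
  [set l in secants | P \in l].

(* |X ∩ C_P|; the family T_X is indexed by the P in the unital with this >= 2 *)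
Definition tsize (X : {set {set {set vec}}}) (P : {set vec}) : nat :=
  #|X :&: clique P|.
Definition inTX (X : {set {set {set vec}}}) (P : {set vec}) : bool :=
  (P \in unital) && (2 <= tsize X P)%N.

End Hermitian.

Section Classes.
Variables (R : realType) (F : finFieldType) (q : nat)
  (X : {set {set {set vec F}}}) (k n : nat).

Definition inS (P : {set vec F}) : bool :=
  inTX F q X P && ((tsize F q X P)%:R <= Num.sqrt (2 * k%:R) / ln (n%:R : R)).
Definition inM (P : {set vec F}) : bool :=
  inTX F q X P && (Num.sqrt (2 * k%:R) / ln (n%:R : R) < (tsize F q X P)%:R)
             && ((tsize F q X P)%:R <= Num.sqrt (2 * k%:R : R)).
Definition inL (P : {set vec F}) : bool :=
  inTX F q X P && (Num.sqrt (2 * k%:R : R) < (tsize F q X P)%:R).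

Definition v_of (U : pred {set vec F}) : nat :=
  (\sum_(P in unital F q | U P) tsize F q X P)%N.
End Classes.

From Pilot Require Import Defs.
From HB Require Import structures.
From mathcomp Require Import all_boot all_order all_algebra.
From mathcomp Require Import reals exp finfield.
From mathcomp Require Import zify ring lra.
Import Order.TTheory GRing.Theory Num.Theory.
Set Implicit Arguments.
Unset Strict Implicit.
Unset Printing Implicit Defensive.
Local Open Scope ring_scope.

(* The sets X :&: C_P pairwise share at most one secant, since two points lie on
   one line.  If m of them have more than sqrt(2k) elements, a Bonferroni count
   inside X forces m <= sqrt(2k), and then v(L) <= k + m(m-1)/2 <= 2k.
   For the second bound count incidences: every secant of X meets the unital in
   q+1 points, so the |X :&: C_P| sum to (q+1)k over the unital, and outside
   S, M, L only the points with |X :&: C_P| <= 1 contribute, at most 1 each, to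
   this sum; the unital has at most q^3+1 points. *)

Lemma card_expr_eq_le (F : finFieldType) (m : nat) (c : F) :
  (0 < m)%N -> (#|[set x : F | x ^+ m == c]| <= m)%N.
Proof.
move=> m_gt0; have p_neq0 : 'X^m - c%:P != 0 :> {poly F}.
  by rewrite -size_poly_eq0 size_XnsubC.
rewrite -ltnS -(size_XnsubC c m_gt0) cardE.
apply: max_poly_roots p_neq0 _ (enum_uniq _).
by apply/allP => x; rewrite mem_enum inE rootE !hornerE subr_eq0.
Qed.

Lemma card_expr_eq0 (F : finFieldType) (m : nat) :
  (0 < m)%N -> #|[set x : F | x ^+ m == 0]| = 1%N.
Proof.
move=> m_gt0; rewrite -(cards1 (0 : F)); apply: eq_card => x.
by rewrite !inE expf_eq0 m_gt0.
Qed.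

Lemma card_fibres (T U : finType) (f : T -> U) (A : {set T}) (S : {set U}) :
  {in A, forall x, f x \in S} ->
  #|A| = (\sum_(c in S) #|[set x in A | f x == c]|)%N.
Proof.
move=> fAS; rewrite -sum1_card (partition_big f (mem S)) //=.
by apply: eq_bigr => c _; rewrite -sum1_card; apply: eq_bigl => x; rewrite inE.
Qed.

Section GaloisNorm.
Variables (F : finFieldType) (q : nat).
Hypotheses (q_ge2 : (2 <= q)%N) (cardF : #|F| = (q ^ 2)%N).

Lemma norm_pred_eq1 (x : F) : x != 0 -> (x ^+ q.+1) ^+ q.-1 = 1.
Proof.
move=> x_neq0; apply: (mulIf x_neq0); rewrite mul1r -exprM -exprSr.
have -> : (q.+1 * q.-1).+1 = (q ^ 2)%N by lia.
by rewrite -cardF expf_card.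
Qed.

Lemma exprN1_pred : (-1 : F)%R ^+ q.-1 = 1.
Proof.
have q_gt0 : (0 < q)%N by lia.
case/boolP: (odd q) => [q_odd | q_even].
  by rewrite -signr_odd -(prednK q_gt0) /= in q_odd *; rewrite (negPf q_odd).
have N1_eq1 : (-1 : F)%R = 1.
  by rewrite -[LHS]expf_card cardF -signr_odd oddX (negPf q_even).
by rewrite N1_eq1 expr1n.
Qed.

(* x ^+ q.+1 is the norm onto the subfield of order q: the q^2-1 units fall into
   at most q-1 fibres of size at most q+1, so every fibre, that of -1 included,
   is full. *)
Lemma card_norm_fibreN1_ge : (q.+1 <= #|[set y : F | y ^+ q.+1 == (-1 : F)%R]|)%N.
Proof.
pose S := [set c : F | c ^+ q.-1 == 1].
pose fibre c := #|[set x in [set x : F | x != 0] | x ^+ q.+1 == c]|.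
have N1_S : (-1 : F)%R \in S by rewrite inE exprN1_pred.
have card_S : (#|S| <= q.-1)%N by apply: card_expr_eq_le; lia.
have fibre_le c : (fibre c <= q.+1)%N.
  apply: leq_trans _ (card_expr_eq_le c (ltn0Sn q)).
  by apply: subset_leq_card; apply/subsetP => x; rewrite !inE => /andP[].
have units_fibres : (q ^ 2).-1 = (\sum_(c in S) fibre c)%N.
  rewrite -cardF -(cardsC1 (0 : F)) (@card_fibres _ _ (fun x => x ^+ q.+1) _ S).
    by apply: eq_bigr => c _; apply: eq_card => x; rewrite !inE.
  by move=> x; rewrite !inE => /norm_pred_eq1 ->.
have other_fibres : (\sum_(c in S :\ (-1 : F)%R) fibre c <= (q - 2) * q.+1)%N.
  apply: (@leq_trans (\sum_(c in S :\ (-1 : F)%R) q.+1)); first exact: leq_sum.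
  rewrite sum_nat_const leq_mul2r; apply/orP; right.
  by move: card_S; rewrite (cardsD1 (-1 : F)%R S) N1_S; lia.
rewrite (big_setD1 (-1 : F)%R) //= in units_fibres.
have fibreN1_le : (fibre (-1 : F)%R <= #|[set y : F | y ^+ q.+1 == (-1 : F)%R]|)%N.
  by apply: subset_leq_card; apply/subsetP => x; rewrite !inE => /andP[].
have : ((q - 2) * q.+1 + q.+1 = (q ^ 2).-1)%N by nia.
move: other_fibres units_fibres; set rest := (\sum_(c in S :\ _) _)%N; lia.
Qed.
End GaloisNorm.

Section Projective.
Variable F : finFieldType.

Lemma vscaleA (c d : F) (v : vec F) :
  vscale F c (vscale F d v) = vscale F (c * d) v.
Proof. by rewrite /vscale /vx /vy /vz /= !mulrA. Qed.

Lemma vdot_scaler (a v : vec F) (c : F) : vdot F a (vscale F c v) = c * vdot F a v.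
Proof. by rewrite /vdot /vscale /vx /vy /vz /=; ring. Qed.

Lemma vdot_scalel (a v : vec F) (c : F) : vdot F (vscale F c a) v = c * vdot F a v.
Proof. by rewrite /vdot /vscale /vx /vy /vz /=; ring. Qed.

Lemma pt_scale (c : F) (v : vec F) : c != 0 -> pt F (vscale F c v) = pt F v.
Proof.
move=> c_neq0; apply/setP => w; apply/imsetP/imsetP => -[d]; rewrite inE => d_neq0 ->.
  by exists (d * c); rewrite ?inE ?mulf_neq0 ?vscaleA.
by exists (d / c); rewrite ?inE ?mulf_neq0 ?invr_eq0 // vscaleA divfK.
Qed.

Lemma herm_scale (q : nat) (c : F) (v : vec F) :
  c != 0 -> herm F q (vscale F c v) = herm F q v.
Proof.
move=> c_neq0; rewrite /herm /vscale /vx /vy /vz /= !exprMn -!mulrDr.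
by rewrite mulf_eq0 expf_eq0 (negPf c_neq0) andbF.
Qed.

Lemma line_scale (c : F) (a : vec F) :
  c != 0 -> PG_line F (vscale F c a) = PG_line F a.
Proof.
move=> c_neq0; apply/setP => P; rewrite !inE; congr (_ && _).
by apply: eq_existsb => v; rewrite vdot_scalel mulf_eq0 (negPf c_neq0).
Qed.

Lemma pt_on_line (a u : vec F) : pt F u \in PG_line F a -> vdot F a u = 0.
Proof.
rewrite inE => /andP[_ /existsP[_ /andP[/imsetP[c /[!inE] c_neq0 ->] /eqP]]].
by rewrite vdot_scaler => /eqP; rewrite mulf_eq0 (negPf c_neq0) => /eqP.
Qed.

Definition cross (u w : vec F) : vec F :=
  (vy F u * vz F w - vz F u * vy F w, vz F u * vx F w - vx F u * vz F w,
   vx F u * vy F w - vy F u * vx F w).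

Lemma cross_eq0_scale (a m : vec F) :
  m != (0, 0, 0) -> cross a m = (0, 0, 0) -> exists c, a = vscale F c m.
Proof.
case: a m => [[a1 a2] a3] [[m1 m2] m3] m_neq0.
rewrite /cross /vscale /vx /vy /vz /= => -[/subr0_eq r23 /subr0_eq r31 /subr0_eq r12].
have [m1_0 | m1_neq0] := eqVneq m1 0; last first.
  exists (a1 / m1); congr (_, _, _); apply: (mulIf m1_neq0); rewrite mulrAC divfK //.
have [m2_0 | m2_neq0] := eqVneq m2 0; last first.
  exists (a2 / m2); congr (_, _, _); apply: (mulIf m2_neq0); rewrite mulrAC divfK //.
have [m3_0 | m3_neq0] := eqVneq m3 0; last first.
  exists (a3 / m3); congr (_, _, _); apply: (mulIf m3_neq0); rewrite mulrAC divfK //.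
by move: m_neq0; rewrite m1_0 m2_0 m3_0 eqxx.
Qed.

Lemma cross_perp (a u w : vec F) :
  vdot F a u = 0 -> vdot F a w = 0 -> cross a (cross u w) = (0, 0, 0).
Proof.
case: a u w => [[a1 a2] a3] [[u1 u2] u3] [[w1 w2] w3].
rewrite /cross /vdot /vx /vy /vz /= => au aw.
have bac_cab (ui wi : F) : ui * (a1 * w1 + a2 * w2 + a3 * w3)
    - wi * (a1 * u1 + a2 * u2 + a3 * u3) = 0 by rewrite au aw !mulr0 subrr.
congr (_, _, _);
  [rewrite -(bac_cab u1 w1) | rewrite -(bac_cab u2 w2) | rewrite -(bac_cab u3 w3)]; ring.
Qed.

Lemma PG_line_through2 (a u w : vec F) :
    a != (0, 0, 0) -> u != (0, 0, 0) -> w != (0, 0, 0) -> pt F u != pt F w ->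
    pt F u \in PG_line F a -> pt F w \in PG_line F a ->
  PG_line F a = PG_line F (cross u w).
Proof.
move=> a_neq0 u_neq0 w_neq0 uw /pt_on_line au /pt_on_line aw.
have uw_neq0 : cross u w != (0, 0, 0).
  apply: contra uw => /eqP /(cross_eq0_scale w_neq0) [c u_eq].
  have c_neq0 : c != 0 by apply: contraNneq u_neq0 => c0; rewrite u_eq c0 /vscale !mul0r.
  by rewrite u_eq pt_scale.
have [c a_eq] := cross_eq0_scale uw_neq0 (cross_perp au aw).
have c_neq0 : c != 0 by apply: contraNneq a_neq0 => c0; rewrite a_eq c0 /vscale !mul0r.
by rewrite a_eq line_scale.
Qed.

Lemma card_lines_through2_le1 (P Q : {set vec F}) :
    P \in PG_points F -> Q \in PG_points F -> P != Q ->
  (#|[set l in PG_lines F | (P \in l) && (Q \in l)]| <= 1)%N.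
Proof.
move=> /imsetP[u /[!inE] u_neq0 ->] /imsetP[w /[!inE] w_neq0 ->] uw.
have line_uw l : l \in [set l in PG_lines F | (pt F u \in l) && (pt F w \in l)] ->
    l = PG_line F (cross u w).
  rewrite !inE => /and3P[/imsetP[a /[!inE] a_neq0 ->] ua wa].
  exact: PG_line_through2.
by apply/card_le1_eqP => l1 l2 /line_uw -> /line_uw ->.
Qed.
End Projective.

Section UnitalCount.
Variables (F : finFieldType) (q : nat).
Hypotheses (q_ge2 : (2 <= q)%N) (cardF : #|F| = (q ^ 2)%N).

Let affine_herm := [set p : F * F | p.1 ^+ q.+1 + p.2 ^+ q.+1 == -1].

Lemma card_affine_herm_le : (#|affine_herm| <= q ^ 3 - q)%N.
Proof.
pose Y := [set y : F | y ^+ q.+1 == -1].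
have fibre_le x :
    (#|[set p in affine_herm | p.1 == x]| <= if x \in Y then 1 else q.+1)%N.
  pose B := [set y : F | y ^+ q.+1 == - 1 - x ^+ q.+1].
  have card_B : (#|B| <= if x \in Y then 1 else q.+1)%N.
    rewrite /B inE; case: eqP => [-> | _]; last exact: card_expr_eq_le.
    by rewrite subrr card_expr_eq0.
  apply: leq_trans _ card_B; apply: leq_trans _ (leq_imset_card (pair x) B).
  apply/subset_leq_card/subsetP => -[x' y]; rewrite !inE /= => /andP[eq_xy /eqP x'_eq].
  subst x'; apply/imsetP; exists y => //.
  by rewrite inE -(eqP eq_xy) [_ + y ^+ _]addrC addrK.
rewrite (@card_fibres _ _ fst _ setT) //.
apply: leq_trans (leq_sum _ (fun x _ => fibre_le x)) _.
rewrite (big_setID Y) setTI setTD.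
rewrite (eq_bigr (fun _ => 1%N)) => [|x ->] //.
rewrite [X in (_ + X <= _)%N](eq_bigr (fun _ => q.+1)) => [|x]; last first.
  by rewrite inE => /negPf ->.
rewrite !sum_nat_const muln1.
have := cardsC Y; have := card_norm_fibreN1_ge q_ge2 cardF; rewrite cardF -/Y.
nia.
Qed.

Lemma unital_sub_charts : unital F q \subset
  [set pt F ((p.1, p.2), 1) | p in affine_herm] :|:
  [set pt F ((x, 1), 0) | x in [set x : F | x ^+ q.+1 == -1]].
Proof.
apply/subsetP => _ /imsetP[[[x y] z] /setIdP[v_neq0 herm_v] ->].
have scale_v c : vscale F c ((x, y), z) = ((c * x, c * y), c * z) by [].
have [z0 | z_neq0] := eqVneq z 0; last first.
  apply/setUP; left; apply/imsetP; exists (z^-1 * x, z^-1 * y).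
    move: herm_v; rewrite -(herm_scale _ _ (invr_neq0 z_neq0)) scale_v mulVf //.
    by rewrite /herm /vx /vy /vz /= expr1n inE addr_eq0.
  by rewrite -[LHS](pt_scale _ (invr_neq0 z_neq0)) scale_v mulVf.
have [y0 | y_neq0] := eqVneq y 0.
  move: herm_v v_neq0; rewrite y0 z0 /herm /vx /vy /vz /= !expr0n /= !addr0.
  by rewrite expf_eq0 /= => /eqP ->; rewrite inE eqxx.
apply/setUP; right; apply/imsetP; exists (y^-1 * x).
  move: herm_v; rewrite -(herm_scale _ _ (invr_neq0 y_neq0)) scale_v mulVf // z0 mulr0.
  by rewrite /herm /vx /vy /vz /= expr1n expr0n addr0 inE addr_eq0.
by rewrite -[LHS](pt_scale _ (invr_neq0 y_neq0)) scale_v mulVf // z0 mulr0.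
Qed.

Lemma card_unital_le : (#|unital F q| <= q ^ 3 + 1)%N.
Proof.
apply: leq_trans (subset_leq_card unital_sub_charts) _.
apply: leq_trans (leq_card_setU _ _).1 _.
apply: leq_trans (leq_add (leq_imset_card _ _) (leq_imset_card _ _)) _.
have := card_expr_eq_le (-1 : F)%R (ltn0Sn q); have := card_affine_herm_le.
have : (q <= q ^ 3)%N by rewrite -{1}(expn1 q) leq_pexp2l; lia.
lia.
Qed.
End UnitalCount.

Section LinearSpaceBlocks.
Variables (T : finType) (I : eqType) (f : I -> {set T}).

Lemma card_setI_bigcup_le (A : {set T}) (s : seq I) :
    (forall j, j \in s -> #|A :&: f j| <= 1)%N ->
  (#|A :&: \bigcup_(j <- s) f j| <= size s)%N.
Proof.
elim: s => [|j s IH] meet; first by rewrite big_nil setI0 cards0.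
rewrite big_cons setIUr (leq_trans (leq_card_setU _ _).1) // /= -add1n.
rewrite leq_add ?meet ?mem_head //; apply: IH => i i_s.
by apply: meet; rewrite in_cons i_s orbT.
Qed.

Lemma sum_card_le_bigcup (s : seq I) :
    uniq s -> {in s &, forall i j, i != j -> #|f i :&: f j| <= 1}%N ->
  (2 * \sum_(i <- s) #|f i| <= 2 * #|\bigcup_(i <- s) f i| + size s * (size s).-1)%N.
Proof.
elim: s => [|x s IH] /=; first by rewrite !big_nil.
move=> /andP[x_notin_s s_uniq] meet.
have meet_s : {in s &, forall i j, i != j -> #|f i :&: f j| <= 1}%N.
  by apply: sub_in2 meet => i i_s; rewrite in_cons i_s orbT.
have meet_x : (#|f x :&: \bigcup_(j <- s) f j| <= size s)%N.
  apply: card_setI_bigcup_le => j j_s; apply: meet; rewrite ?mem_head ?in_cons ?j_s ?orbT //.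
  by apply: contraNneq x_notin_s => ->.
have := cardsUI (f x) (\bigcup_(j <- s) f j); have := IH s_uniq meet_s.
rewrite !big_cons; case: (size s) meet_x => [|n] /=; nia.
Qed.

Lemma bigcup_subset (X : {set T}) (s : seq I) :
  (forall i, i \in s -> f i \subset X) -> \bigcup_(i <- s) f i \subset X.
Proof.
elim: s => [|i s IH] sub; first by rewrite big_nil sub0set.
by rewrite big_cons subUset sub ?mem_head // IH // => j j_s; rewrite sub // in_cons j_s orbT.
Qed.

Variables (X : {set T}) (k : nat).
Hypothesis card_X : (#|X| <= k)%N.

Lemma sq_size_large_blocks_le (s : seq I) :
    uniq s -> {in s &, forall i j, i != j -> #|f i :&: f j| <= 1}%N ->
    (forall i, i \in s -> f i \subset X) ->
    (forall i, i \in s -> 2 * k < #|f i| ^ 2)%N ->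
  (size s ^ 2 <= 2 * k)%N.
Proof.
elim: s => [|x s IH] //= /andP[x_notin_s s_uniq] meet sub large.
have s_sub : {subset s <= x :: s} by move=> i i_s; rewrite in_cons i_s orbT.
have n2 : (size s ^ 2 <= 2 * k)%N.
  by apply: IH (sub_in2 s_sub meet) _ _ => // i /s_sub; [apply: sub | apply: large].
(* If n blocks fit but n+1 do not, the n+1 blocks have at least n+1 elements
   each, and Bonferroni gives 2(n+1)^2 <= 2k + n(n+1) < (n+1)(2n+1). *)
rewrite leqNgt; apply/negP => big.
have sum_ge : ((size s).+1 * (size s).+1 <= \sum_(i <- x :: s) #|f i|)%N.
  rewrite -[X in (X * _)%N]/(size (x :: s)) -sum1_size big_distrl /= big_seq.
  rewrite [leqRHS]big_seq; apply: leq_sum => i /large; rewrite mul1n; nia.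
have := @sum_card_le_bigcup (x :: s); rewrite /= x_notin_s s_uniq => /(_ isT meet).
have := leq_trans (subset_leq_card (bigcup_subset sub)) card_X.
nia.
Qed.

Lemma sum_card_large_blocks_le (s : seq I) :
    uniq s -> {in s &, forall i j, i != j -> #|f i :&: f j| <= 1}%N ->
    (forall i, i \in s -> f i \subset X) ->
    (forall i, i \in s -> 2 * k < #|f i| ^ 2)%N ->
  (\sum_(i <- s) #|f i| <= 2 * k)%N.
Proof.
move=> s_uniq meet sub large.
have := sq_size_large_blocks_le s_uniq meet sub large; have := sum_card_le_bigcup s_uniq meet.
have := leq_trans (subset_leq_card (bigcup_subset sub)) card_X.
case: (size s) => [|m] /=; nia.
Qed.
End LinearSpaceBlocks.

Lemma leq_sum_cover (I : finType) (A : {pred I}) (t : I -> nat) (P1 P2 : pred I) :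
    {in A, forall i, 1 < t i -> P1 i || P2 i}%N ->
  (\sum_(i in A) t i <= \sum_(i in A | P1 i) t i + \sum_(i in A | P2 i) t i + #|A|)%N.
Proof.
move=> cover; rewrite -sum1_card !big_mkcondr -!big_split /=.
apply: leq_sum => i /cover; case: (P1 i) (P2 i) => [] [];
  by rewrite /= ?implybT ?implybF -?leqNgt; lia.
Qed.

Section Secants.
Variables (F : finFieldType) (q : nat).

Lemma unital_sub_PG_points : unital F q \subset PG_points F.
Proof.
apply/subsetP => _ /imsetP[v /setIdP[v_neq0 _] ->]; exact: imset_f.
Qed.

Lemma card_setI_cliques_le1 (X : {set {set {set vec F}}}) (P Q : {set vec F}) :
    P \in unital F q -> Q \in unital F q -> P != Q ->
  (#|(X :&: clique F q P) :&: (X :&: clique F q Q)| <= 1)%N.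
Proof.
move=> /(subsetP unital_sub_PG_points) P_pt /(subsetP unital_sub_PG_points) Q_pt PQ.
apply: leq_trans (card_lines_through2_le1 P_pt Q_pt PQ); apply/subset_leq_card/subsetP.
by move=> l; rewrite !inE => /and4P[/and3P[_ /andP[-> _] ->] _ _ ->].
Qed.

Lemma sum_tsize_unital (X : {set {set {set vec F}}}) :
  X \subset secants F q -> (\sum_(P in unital F q) Defs.tsize F q X P = #|X| * q.+1)%N.
Proof.
move=> X_secants; rewrite -sum1_card big_distrl /=.
under eq_bigr => P _ do rewrite /Defs.tsize -sum1_card big_mkcond.
rewrite exchange_big [RHS]big_mkcond; apply: eq_bigr => l _ /=.
case: ifP => l_X; last by rewrite big1 // => P _; rewrite !inE l_X.
have /[!inE] /andP[l_line /eqP card_l] := subsetP X_secants l l_X.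
rewrite mul1n -{1}card_l -sum1_card [RHS]big_mkcond [LHS]big_mkcond.
apply: eq_bigr => P _; rewrite !inE l_X l_line card_l eqxx /=.
by case: (P \in l); case: (P \in unital F q).
Qed.
End Secants.

Lemma ltr_sqrt_nat (R : rcfType) (a m : nat) :
  (Num.sqrt (a%:R : R) < m%:R) = (a < m ^ 2)%N.
Proof.
case: m => [|m]; first by rewrite ltNge sqrtr_ge0 ltn0.
have -> : m.+1%:R = Num.sqrt (m.+1%:R ^+ 2 : R) by rewrite sqrtr_sqr ger0_norm.
by rewrite ltr_sqrt ?exprn_gt0 // -natrX ltr_nat.
Qed.

Lemma inTX_classes (R : realType) (F : finFieldType) (q : nat)
    (X : {set {set {set vec F}}}) (k n : nat) (P : {set vec F}) :
    P \in unital F q -> (1 < Defs.tsize F q X P)%N ->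
  (inS R F q X k n P || inM R F q X k n P) || inL R F q X k P.
Proof.
rewrite /inS /inM /inL /inTX => -> -> /=.
by case: lerP => //= _; case: lerP => //=; rewrite orbT.
Qed.

Lemma v_of_inL_le (R : realType) (F : finFieldType) (q : nat)
    (X : {set {set {set vec F}}}) (k : nat) :
  (#|X| <= k)%N -> (v_of F q X (inL R F q X k) <= 2 * k)%N.
Proof.
move=> card_X; rewrite /v_of -big_enum_cond -big_filter.
set s := filter _ _; have mem_s P : P \in s -> P \in unital F q /\ inL R F q X k P.
  by rewrite mem_filter mem_enum => /andP[].
apply: (sum_card_large_blocks_le card_X) => [|P Q|P|P].
- exact/filter_uniq/enum_uniq.
- by move=> /mem_s[P_H _] /mem_s[Q_H _]; apply: card_setI_cliques_le1.
- by move=> _; apply: subsetIl.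
- by move=> /mem_s[_ /andP[_]]; rewrite -natrM ltr_sqrt_nat.
Qed.

Theorem mainTheorem5 (R : realType) (q : nat) (F : finFieldType)
  (X : {set {set {set vec F}}}) (k : nat) :
  (2 <= q)%N ->
  (exists p e : nat, prime p /\ q = (p ^ e)%N) ->
  #|F| = (q ^ 2)%N ->
  X \subset secants F q ->
  #|X| = k ->
  let n : nat := (q ^ 2 * (q ^ 2 - q + 1))%N in
  (v_of F q X (inL R F q X k) <= 2 * k)%N /\
  ((v_of F q X (fun P => inS R F q X k n P || inM R F q X k n P))%:R : R)
    >= (q%:R - 1) * k%:R - (q ^ 3)%:R - 1.
Proof.
move=> q_ge2 _ cardF X_secants card_X n.
have vL_le := v_of_inL_le R q (eq_leq card_X).
split=> //.
have := leq_sum_cover (t := Defs.tsize F q X)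
  (P1 := fun P => inS R F q X k n P || inM R F q X k n P) (P2 := inL R F q X k)
  (inTX_classes R k n).
rewrite sum_tsize_unital // card_X -/(v_of _ _ _ _) -/(v_of _ _ _ _).
set V := v_of _ _ _ _ => cover.
have := leq_trans cover (leq_add (leq_add (leqnn V) vL_le) (card_unital_le q_ge2 cardF)).
rewrite -(ler_nat R) !natrD !natrM; lra.
Qed.
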